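(* Let $G=(V,E,\omega)$ be a graph and let $S_m\in st(G)$. If $S_m\subseteq S_{m-1}\subseteq\dots\subseteq S_1\subseteq V$, then $S_1,\dots,S_{m-1},S_m$ induces a sequence of reductions on $G$, and $\mathcal{R}(G;S_1,\dots,S_{m-1},S_m)=\mathcal{R}_{S_m}(G)$.
   Context: Let $\mathbb{W}$ be the field of rational functions $p(\lambda)/q(\lambda)$ in a complex variable $\lambda$ with $p,q\in\mathbb{C}[\lambda]$, $q\neq 0$. A graph $G=(V,E,\omega)$ is a finite directed graph with vertex set $V=\{v_1,\dots,v_n\}$, edge set $E$ (loops allowed, at most one edge $e_{ij}$ from $v_i$ to $v_j$) and edge weights $\omega:E\to\mathbb{W}\setminus\{0\}$; set $\omega(e_{ij})=0$ if there is no edge from $v_i$ to $v_j$. For $U\subseteq V$, $G|_U$ is the induced subgraph on $U$; $\bar S=V\setminus S$; $\ell(G)$ is $G$ with all loops removed. A path is a sequence $u_1,\dots,u_m$ ($m\ge 2$) of distinct vertices with an edge from $u_k$ to $u_{k+1}$ for each $k$; a cycle is such a sequence with $u_1=u_m$ and $u_1,\dots,u_{m-1}$ distinct; $u_2,\dots,u_{m-1}$ are the interior vertices. A nonempty $S\subseteq V$ is a structural set of $G$ if $\ell(G)|_{\bar S}$ contains no cycles and $\omega(e_{ii})\neq\lambda$ (as elements of $\mathbb{W}$) for every $v_i\in\bar S$; $st(G)$ is the set of structural sets. For $S\in st(G)$ and $v_i,v_j\in S$, $\mathcal{B}_{ij}(G;S)$ is the set of paths or cycles from $v_i$ to $v_j$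 with no interior vertex in $S$. For $\beta=u_1,\dots,u_m$ the branch product is $\mathcal{P}_\omega(\beta)=\omega(u_1u_2)\prod_{k=2}^{m-1}\frac{\omega(u_ku_{k+1})}{\lambda-\omega(u_ku_k)}$ ($=\omega(u_1u_2)$ if $m=2$), $\omega(uu')$ being the weight of the edge from $u$ to $u'$. The isospectral reduction $\mathcal{R}_S(G)$ is the graph with vertex set $S$, an edge from $v_i$ to $v_j$ iff $\mathcal{B}_{ij}(G;S)\neq\emptyset$, of weight $\sum_{\beta\in\mathcal{B}_{ij}(G;S)}\mathcal{P}_\omega(\beta)$. Sets $S_m\subseteq\dots\subseteq S_1\subseteq V$ induce a sequence of reductions on $G$ if $S_1\in st(G)$ and, setting $\mathcal{R}_1(G)=\mathcal{R}_{S_1}(G)$, for each $1\le i\le m-1$ one has $S_{i+1}\in st(\mathcal{R}_i(G))$, with $\mathcal{R}_{i+1}(G)=\mathcal{R}_{S_{i+1}}(\mathcal{R}_i(G))$; then $\mathcal{R}(G;S_1,\dots,S_m)=\mathcal{R}_m(G)$, and $S_m$ is the final vertex set. *)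

From HB Require Import structures.
From mathcomp Require Import all_boot all_order all_algebra.
From mathcomp Require Import fraction complex.
From mathcomp Require Import reals.
Set Implicit Arguments. Unset Strict Implicit. Unset Printing Implicit Defensive.
Import Order.TTheory GRing.Theory Num.Theory.
Local Open Scope ring_scope.

(* W = C(lambda): rational functions in one complex variable; C = R[i] with R : realType *)
Definition Wfield (R : realType) : fieldType := {fraction {poly R[i]}}.

Definition lam (R : realType) : Wfield R := @FracField.tofrac {poly R[i]} 'X.

(* A graph on a subset [verts] of a fixed finite vertex universe T;
   wt u v is the weight of the edge u -> v, with 0 meaning "no edge". *)
Record graph (T : finType) (R : realType) := Graph {
  verts : {set T};
  wt : T -> T -> Wfield R
}.

Section Graphs.
Variables (T : finType) (R : realType).
Implicit Types (G : graph T R) (S : {set T}).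

Definition edge G u v : bool := wt G u v != 0.

Definition no_cycle_outside G S : Prop :=
  forall (x : T) (c : seq T),
    uniq (x :: c) ->
    all (fun u => (u \in verts G) && (u \notin S)) (x :: c) ->
    ~~ path (fun a b => (a != b) && edge G a b) x (rcons c x).

Definition structural G S : Prop :=
  [/\ S != set0, S \subset verts G, no_cycle_outside G S &
      forall v, v \in verts G -> v \notin S -> wt G v v != lam R].

(* [p] is the list of interior vertices of a branch (path or cycle) from i to j
   in B_ij(G;S): the vertex sequence is i :: p ++ [:: j]. *)
Definition is_branch G S (i j : T) (p : seq T) : bool :=
  [&& (uniq (i :: rcons p j) || ((i == j) && uniq (i :: p))),
      all (fun u => (u \in verts G) && (u \notin S)) p &
      path (edge G) i (rcons p j)].

Fixpoint bprod G (a : T) (p : seq T) (j : T) : Wfield R :=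
  match p with
  | [::] => wt G a j
  | x :: p' => wt G a x * (bprod G x p' j / (lam R - wt G x x))
  end.

(* Sum over all branches in B_ij(G;S); a branch has at most #|T| interior vertices. *)
Definition branch_sum G S (i j : T) : Wfield R :=
  \sum_(k < #|T|.+1) \sum_(t : k.-tuple T | is_branch G S i j t) bprod G i t j.

Definition reduction G S : graph T R :=
  Graph S (fun i j => if (i \in S) && (j \in S) then branch_sum G S i j else 0).

Fixpoint induces_seq G (ss : seq {set T}) : Prop :=
  match ss with
  | [::] => True
  | X :: ss' => structural G X /\ induces_seq (reduction G X) ss'
  end.

Fixpoint reduction_seq G (ss : seq {set T}) : graph T R :=
  match ss with
  | [::] => G
  | X :: ss' => reduction_seq (reduction G X) ss'
  end.

Definition graph_eq (G H : graph T R) : Prop :=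
  verts G = verts H /\
  forall u v, u \in verts G -> v \in verts G -> wt G u v = wt H u v.

End Graphs.

From HB Require Import structures.
From mathcomp Require Import all_boot all_order all_algebra.
From mathcomp Require Import fraction complex reals.
Set Implicit Arguments. Unset Strict Implicit. Unset Printing Implicit Defensive.
Import Order.TTheory GRing.Theory Num.Theory.
Local Open Scope ring_scope.

(* Splitting off the first edge of a branch shows that, for [j \in S], the
   column [a |-> branch_sum G S a j] solves a linear system whose unknowns are
   the values at the vertices outside [S].  That system has at most one
   solution: a nonzero solution of the homogeneous system would propagate
   along arbitrarily long walks outside [S], closing a cycle there.  For
   [S2 \subset S1], cutting each branch of [G] at its vertices in [S1] shows
   that the column of [R_S2(G)] solves the system of [R_S1(G)] relative to
   [S2]; so does the column of [R_S2(R_S1(G))], hence the two reductions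
   agree, and the theorem follows by induction along the chain. *)

Section Walks.
Variable T : finType.

Lemma uniq_size_card (s : seq T) : uniq s -> (size s <= #|T|)%N.
Proof.
by move=> s_uniq; rewrite cardT uniq_leq_size // => x; rewrite mem_enum.
Qed.

Lemma path_not_uniq_cycle (r : rel T) x p : path r x p -> ~~ uniq (x :: p) ->
  exists y c, [/\ uniq (y :: c), path r y (rcons c y) & {subset y :: c <= x :: p}].
Proof.
elim: p {-2}p (leqnn (size p)) x => [|z p IH] q; first by case: q.
move=> size_q x r_xq not_uniq.
have [x_in_q | x_notin_q] := boolP (x \in q).
  case/splitPr: x_in_q size_q r_xq not_uniq => q1 q2 size_q.
  rewrite cat_path /= => /and3P [r_xq1 r_last _] _.
  have r_cycle : path r x (rcons q1 x) by rewrite rcons_path r_xq1.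
  have sub_q1 : {subset x :: q1 <= x :: q1 ++ x :: q2}.
    by move=> w; rewrite !inE mem_cat => /orP [->|->]; rewrite ?orbT.
  have [uniq_q1 | not_uniq_q1] := boolP (uniq (x :: q1)); first by exists x, q1.
  have size_q1 : (size q1 <= size p)%N.
    by move: size_q; rewrite size_cat /= addnS ltnS => /(leq_trans (leq_addr _ _)).
  have [y [c [uniq_c r_c sub_c]]] := IH q1 size_q1 x r_xq1 not_uniq_q1.
  by exists y, c; split=> // w /sub_c /sub_q1.
case: q size_q r_xq not_uniq x_notin_q => [//|y q] size_q /= /andP [_ r_yq].
move=> + x_notin_q; rewrite x_notin_q /= => not_uniq.
have [w [c [uniq_c r_c sub_c]]] := IH q size_q y r_yq not_uniq.
by exists w, c; split=> // v /sub_c v_in; rewrite inE v_in orbT.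
Qed.

Lemma uniq_path_irrefl (e : rel T) x s : uniq (x :: s) -> path e x s ->
  path (fun a b => (a != b) && e a b) x s.
Proof.
elim: s x => [//|y s IH] x /= /andP [x_notin uniq_s] /andP [e_xy e_s].
rewrite e_xy IH // !andbT; apply: contraNneq x_notin => ->.
exact: mem_head.
Qed.

End Walks.

Lemma sumr_neq0P (I : finType) (V : nmodType) (P : pred I) (F : I -> V) :
  \sum_(i | P i) F i != 0 -> exists2 i, P i & F i != 0.
Proof.
move=> sum_neq0.
have [i /andP [Pi Fi] | none] := pickP (fun i => P i && (F i != 0)).
  by exists i.
move: sum_neq0; rewrite big1 ?eqxx // => i Pi.
by apply/eqP; move: (none i); rewrite Pi /= => /negbFE.
Qed.

Lemma sumr_drop_neq (I : finType) (V : nmodType) (P : pred I) (F : I -> V) a :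
  (P a -> F a = 0) -> \sum_(i | P i && (i != a)) F i = \sum_(i | P i) F i.
Proof.
move=> Fa0; rewrite [RHS](bigID (pred1 a)) /= [X in X + _]big1 ?add0r //.
by move=> i /andP [Pi /eqP eq_ia]; rewrite eq_ia in Pi *; exact: Fa0.
Qed.

Lemma big_tuple0 (T : finType) (V : nmodType) (P : pred (seq T)) (F : seq T -> V) :
  \sum_(t : 0.-tuple T | P t) F t = if P [::] then F [::] else 0.
Proof.
rewrite big_mkcond (bigD1 [tuple]) //= big1 ?addr0 // => t.
by rewrite (tuple0 t) => /negP.
Qed.

Lemma big_tuple_cons (T : finType) (V : nmodType) k (P : pred (seq T))
    (F : seq T -> V) :
  \sum_(t : k.+1.-tuple T | P t) F t =
  \sum_(y : T) \sum_(t : k.-tuple T | P (y :: t)) F (y :: t).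
Proof.
rewrite pair_big_dep /=.
rewrite (reindex (fun p : T * k.-tuple T => [tuple of p.1 :: p.2])) //=.
exists (fun t : k.+1.-tuple T => (thead t, [tuple of behead t])).
  by move=> [y t] _ /=; congr pair; apply: val_inj.
by move=> t _; rewrite [in RHS](tuple_eta t); apply: val_inj.
Qed.

Section Branches.
Variables (T : finType) (R : realType).
Implicit Types (G : graph T R) (S : {set T}).

Definition outside G S : pred T := fun u => (u \in verts G) && (u \notin S).

Definition ledge G : rel T := fun a b => (a != b) && edge G a b.

(* The factor contributed to a branch product by the step x -> y into an
   interior vertex y. *)
Definition interior_wt G x y : Wfield R := wt G x y / (lam R - wt G y y).

Lemma reduction_wt G S x y :
  x \in S -> y \in S -> wt (reduction G S) x y = branch_sum G S x y.
Proof. by move=> Sx Sy; rewrite /= Sx Sy. Qed.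

Lemma mul_interior_wt G x y r :
  interior_wt G x y * r = wt G x y * (r / (lam R - wt G y y)).
Proof. by rewrite /interior_wt mulrAC -mulrA. Qed.

Lemma outsideS G S S' x : S \subset S' -> outside G S' x -> outside G S x.
Proof.
move=> sub_SS' /andP [Vx xS']; apply/andP; split=> //.
by apply: contra xS'; apply: (subsetP sub_SS').
Qed.

Lemma acyclic_path_uniq G S x p : no_cycle_outside G S ->
  all (outside G S) (x :: p) -> path (ledge G) x p -> uniq (x :: p).
Proof.
move=> acyclic out_xp ledge_xp; apply/negPn/negP => not_uniq.
have [y [c [uniq_c cycle_c sub_c]]] := path_not_uniq_cycle ledge_xp not_uniq.
have out_c : all (outside G S) (y :: c).
  by apply/allP => z /sub_c /(allP out_xp).
by move: (acyclic y c uniq_c out_c); rewrite cycle_c.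
Qed.

Lemma branch_sum_neq0 G S a b :
  branch_sum G S a b != 0 -> exists p, is_branch G S a b p.
Proof. by case/sumr_neq0P => k _ /sumr_neq0P [t branch_t _]; exists t. Qed.

Lemma branch_sum_eq0 G S a b :
  (forall p, ~~ is_branch G S a b p) -> branch_sum G S a b = 0.
Proof.
move=> no_branch; apply: big1 => k _; apply: big1 => t branch_t.
by move: (no_branch t); rewrite branch_t.
Qed.

Lemma is_branch_nil G S a j : is_branch G S a j [::] = edge G a j.
Proof.
apply/and3P/idP => [[_ _ /andP []] // | e_aj]; split; rewrite /= ?e_aj //.
by have [-> | ne_aj] := eqVneq a j; rewrite ?eqxx ?orbT // inE ne_aj.
Qed.

Lemma is_branch_head G S a j y t :
  is_branch G S a j (y :: t) -> outside G S y && (y != a).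
Proof.
case/and3P => uniq_p /andP [out_y _] _; apply/andP; split=> //.
by case/orP: uniq_p => [|/andP [_]] /andP [a_notin _];
  apply: contraNneq a_notin => ->; rewrite inE eqxx.
Qed.

Lemma is_branch_size G S y j t :
  y != j -> is_branch G S y j t -> ((size t).+2 <= #|T|)%N.
Proof.
move=> ne_yj /and3P [uniq_p _ _]; move: uniq_p; rewrite (negbTE ne_yj) orbF.
by move/uniq_size_card; rewrite /= size_rcons.
Qed.

Lemma is_branch_cons G S a j y t : no_cycle_outside G S ->
  a \in verts G -> j \in S -> outside G S y -> y != a -> edge G a y ->
  is_branch G S a j (y :: t) = is_branch G S y j t.
Proof.
move=> acyclic Va Sj out_y ne_ya e_ay.
have ne_yj : (y == j) = false.
  by apply: negbTE; apply: contraTneq Sj => <-; case/andP: out_y.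
apply/idP/idP => [|branch_yt].
  case/and3P => uniq_p /andP [_ out_t] /andP [_ e_t].
  apply/and3P; split=> //; rewrite ne_yj orbF.
  case/orP: uniq_p => [/andP [] // | /andP [/eqP <-]].
  by rewrite -rcons_cons rcons_uniq.
case/and3P: (branch_yt) => uniq_p out_t e_t; move: uniq_p; rewrite ne_yj orbF.
rewrite -rcons_cons rcons_uniq => /andP [j_notin uniq_yt].
have out_yt : all (outside G S) (y :: t) by rewrite /= out_y.
have a_notin : a \notin y :: t.
  have [Sa | notSa] := boolP (a \in S).
    by apply/negP => /(allP out_yt) /andP [_]; rewrite Sa.
  have out_ayt : all (outside G S) (a :: y :: t) by rewrite /= /outside Va notSa.
  have ledge_ayt : path (ledge G) a (y :: t).
    rewrite /= /ledge eq_sym ne_ya e_ay uniq_path_irrefl //.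
    by move: e_t; rewrite rcons_path => /andP [].
  by case/andP: (acyclic_path_uniq acyclic out_ayt ledge_ayt).
apply/and3P; split; [|exact: out_yt | by rewrite rcons_cons /= e_ay].
have [<- | ne_aj] := eqVneq a j.
  by apply/orP; right; rewrite ?eqxx cons_uniq a_notin uniq_yt.
apply/orP; left; rewrite cons_uniq mem_rcons in_cons negb_or ne_aj.
by rewrite a_notin rcons_uniq j_notin uniq_yt.
Qed.

Lemma branch_sum_cons G S a j : branch_sum G S a j = wt G a j +
  \sum_(y : T) \sum_(k < #|T|)
     \sum_(t : k.-tuple T | is_branch G S a j (y :: t)) bprod G a (y :: t) j.
Proof.
rewrite /branch_sum big_ord_recl; congr (_ + _).
  transitivity (if is_branch G S a j [::] then bprod G a [::] j else 0).
    exact: (big_tuple0 (is_branch G S a j) (bprod G a ^~ j)).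
  by rewrite is_branch_nil /edge /=; case: eqP => [->|].
rewrite exchange_big; apply: eq_bigr => k _.
exact: (big_tuple_cons k (is_branch G S a j) (bprod G a ^~ j)).
Qed.

Lemma branch_sum_trunc G S y j : y != j -> branch_sum G S y j =
  \sum_(k < #|T|) \sum_(t : k.-tuple T | is_branch G S y j t) bprod G y t j.
Proof.
move=> ne_yj; rewrite /branch_sum big_ord_recr /= [X in _ + X]big1 ?addr0 //.
move=> t /(is_branch_size ne_yj); rewrite size_tuple.
by move/ltnW; rewrite ltnn.
Qed.

Lemma branch_sum_head G S a j y : no_cycle_outside G S ->
  a \in verts G -> j \in S ->
  \sum_(k < #|T|)
     \sum_(t : k.-tuple T | is_branch G S a j (y :: t)) bprod G a (y :: t) j =
  if outside G S y && (y != a) then interior_wt G a y * branch_sum G S y j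
  else 0.
Proof.
move=> acyclic Va Sj; have [e_ay | /negPn/eqP wt_ay0] := boolP (edge G a y).
  case: ifPn => [/andP [out_y ne_ya] | bad_head]; last first.
    apply: big1 => k _; apply: big1 => t /is_branch_head.
    by rewrite (negbTE bad_head).
  have ne_yj : y != j by apply: contraTneq Sj => <-; case/andP: out_y.
  rewrite branch_sum_trunc // mulr_sumr; apply: eq_bigr => k _.
  rewrite mulr_sumr; apply: eq_big => [t | t _]; first exact: is_branch_cons.
  by rewrite /= mul_interior_wt.
rewrite big1 => [|k _]; last by rewrite big1 // => t _; rewrite /= wt_ay0 mul0r.
by rewrite /interior_wt wt_ay0 !mul0r if_same.
Qed.

Lemma branch_sum_rec G S a j : no_cycle_outside G S ->
  a \in verts G -> j \in S ->
  branch_sum G S a j = wt G a j +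
    \sum_(y | outside G S y && (y != a)) interior_wt G a y * branch_sum G S y j.
Proof.
move=> acyclic Va Sj; rewrite branch_sum_cons [in RHS]big_mkcond; congr (_ + _).
by apply: eq_bigr => y _; rewrite branch_sum_head.
Qed.

(* The linear system satisfied by the column [f = branch_sum G S ^~ j], with
   [c = wt G ^~ j], on the vertices outside [S]. *)
Definition branch_system G S (c f : T -> Wfield R) : Prop :=
  forall x, outside G S x ->
    f x = c x + \sum_(y | outside G S y && (y != x)) interior_wt G x y * f y.

(* A nonzero solution of the homogeneous system propagates along arbitrarily
   long walks outside [S], which acyclicity forbids. *)
Lemma branch_system_eq0 G S (d : T -> Wfield R) : no_cycle_outside G S ->
  branch_system G S (fun=> 0) d -> forall x, outside G S x -> d x = 0.
Proof.
move=> acyclic sys_d.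
have long_walk n x : outside G S x -> d x != 0 ->
    exists p, [/\ size p = n, all (outside G S) p & path (ledge G) x p].
  elim: n x => [|n IH] x out_x dx_neq0; first by exists [::].
  move: dx_neq0; rewrite sys_d // add0r => /sumr_neq0P [y /andP [out_y ne_yx]].
  rewrite mulf_eq0 negb_or => /andP [iw_neq0 dy_neq0].
  have e_xy : edge G x y.
    by apply: contraNneq iw_neq0 => wt0; rewrite /interior_wt wt0 mul0r.
  have [p [size_p out_p walk_p]] := IH y out_y dy_neq0.
  by exists (y :: p); rewrite /= size_p out_y out_p /ledge eq_sym ne_yx e_xy.
move=> x out_x; apply/eqP/negPn/negP => dx_neq0.
have [p [size_p out_p walk_p]] := long_walk #|T| x out_x dx_neq0.
have out_xp : all (outside G S) (x :: p) by rewrite /= out_x.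
have := uniq_size_card (acyclic_path_uniq acyclic out_xp walk_p).
by rewrite /= size_p ltnn.
Qed.

Lemma branch_system_uniq G S (c u v : T -> Wfield R) : no_cycle_outside G S ->
  branch_system G S c u -> branch_system G S c v ->
  forall x, outside G S x -> u x = v x.
Proof.
move=> acyclic sys_u sys_v x out_x; apply/eqP; rewrite -subr_eq0; apply/eqP.
apply: (branch_system_eq0 (d := fun y => u y - v y)) acyclic _ x out_x.
move=> y out_y; rewrite add0r sys_u // sys_v // opprD addrACA subrr add0r.
by rewrite -sumrB; apply: eq_bigr => z _; rewrite mulrBr.
Qed.

Lemma structuralS G S S' :
  S \subset S' -> S' \subset verts G -> structural G S -> structural G S'.
Proof.
move=> sub_SS' sub_S'V [S_neq0 _ acyclic no_lam]; split=> //.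
- by apply: contraNneq S_neq0 => S'0; rewrite -subset0 -S'0.
- move=> x c uniq_c out_c; apply: acyclic => //.
  by apply: sub_all out_c => z; apply: outsideS.
- by move=> v Vv notS'v; apply: no_lam Vv _; apply: contra notS'v; apply: subsetP.
Qed.

End Branches.

Section TwoReductions.
Variables (T : finType) (R : realType) (G : graph T R) (S1 S2 : {set T}).
Hypotheses (sub_S1V : S1 \subset verts G) (sub_S2S1 : S2 \subset S1).
Hypothesis S2_structural : structural G S2.

Local Notation G1 := (reduction G S1).

Lemma S2_acyclic : no_cycle_outside G S2.
Proof. by case: S2_structural. Qed.

Lemma S1_acyclic : no_cycle_outside G S1.
Proof. by case: (structuralS sub_S2S1 sub_S1V S2_structural). Qed.

Lemma big_outside_split (P : pred T) (F : T -> Wfield R) :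
  \sum_(y | outside G S2 y && P y) F y =
  \sum_(y | outside G1 S2 y && P y) F y + \sum_(y | outside G S1 y && P y) F y.
Proof.
rewrite (bigID [in S1]); congr (_ + _); apply: eq_bigl => y; rewrite /outside /=.
  case S1y: (y \in S1); last by rewrite andbF.
  by rewrite (subsetP sub_S1V _ S1y) andbT.
case S1y: (y \in S1); first by rewrite /= !andbF.
have notS2y : y \notin S2 by apply: contraFN S1y; apply: subsetP.
by rewrite notS2y /= !andbT.
Qed.

(* Together with the edge [a -> z], such a branch would close a cycle outside
   [S2]. *)
Lemma no_return a z p : outside G1 S2 a -> outside G S1 z -> edge G a z ->
  ~~ is_branch G S1 z a p.
Proof.
move=> /andP [S1a notS2a] /andP [Vz notS1z] e_az.
apply/negP => /and3P [uniq_p out_p e_p].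
have ne_za : (z == a) = false.
  by apply/eqP => eq_za; move: notS1z; rewrite eq_za S1a.
move: uniq_p; rewrite ne_za orbF => uniq_p.
have out_cycle : all (outside G S2) (a :: z :: rcons p a).
  rewrite /= all_rcons /outside (subsetP sub_S1V _ S1a) notS2a Vz /=.
  rewrite (contra (subsetP sub_S2S1 z) notS1z) /=.
  by apply: sub_all out_p => u; apply: outsideS.
have walk_cycle : path (ledge G) a (z :: rcons p a).
  by rewrite /= /ledge eq_sym ne_za e_az uniq_path_irrefl.
have := acyclic_path_uniq S2_acyclic out_cycle walk_cycle.
by rewrite cons_uniq in_cons mem_rcons mem_head orbT.
Qed.

Lemma reduction_loop v : outside G1 S2 v -> wt G1 v v = wt G v v.
Proof.
move=> out_v; have /andP [S1v _] := out_v.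
rewrite reduction_wt // (branch_sum_rec S1_acyclic (subsetP sub_S1V _ S1v) S1v).
rewrite big1 ?addr0 // => y /andP [out_y _].
have [e_vy | /negPn/eqP wt0] := boolP (edge G v y).
  by rewrite branch_sum_eq0 ?mulr0 // => p; apply: no_return.
by rewrite /interior_wt wt0 !mul0r.
Qed.

(* Each edge of [G1] between vertices of [S1] comes from a branch of [G]
   whose interior lies outside [S1]. *)
Lemma reduction_path_lift x q : x \in S1 ->
  all (outside G1 S2) q -> path (ledge G1) x q ->
  exists q', [/\ path (ledge G) x q', all (outside G S2) q',
                 last x q' = last x q & (size q <= size q')%N].
Proof.
elim: q x => [|y q IH] x S1x.
  by exists [::]; split; [exact: isT | exact: isT | reflexivity | exact: leqnn].
case/andP=> /[dup] out_y /andP [S1y notS2y] out_q.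
case/andP=> /andP [ne_xy e_xy] walk_q.
move: e_xy; rewrite /edge reduction_wt // => /branch_sum_neq0 [p].
case/and3P=> uniq_p out_p e_p; move: uniq_p; rewrite (negbTE ne_xy) orbF => uniq_p.
have [q' [walk_q' out_q' last_q' size_q']] := IH y S1y out_q walk_q.
exists (rcons p y ++ q'); split.
- by rewrite cat_path last_rcons walk_q' andbT uniq_path_irrefl.
- rewrite all_cat all_rcons out_q' /outside (subsetP sub_S1V _ S1y) notS2y /= andbT.
  by apply: sub_all out_p => u; apply: outsideS.
- by rewrite last_cat last_rcons last_q'.
- by rewrite size_cat size_rcons addSn ltnS (leq_trans size_q') ?leq_addl.
Qed.

Lemma reduction_acyclic : no_cycle_outside G1 S2.
Proof.
move=> x c uniq_c /andP [out_x out_c]; apply/negP => cycle_c.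
have /andP [S1x notS2x] := out_x.
have out_cx : all (outside G1 S2) (rcons c x) by rewrite all_rcons; apply/andP.
have [q' [walk_q' out_q' last_q' size_q']] := reduction_path_lift S1x out_cx cycle_c.
have out_xq' : all (outside G S2) (x :: q').
  by rewrite /= out_q' /outside (subsetP sub_S1V _ S1x) notS2x.
have := acyclic_path_uniq S2_acyclic out_xq' walk_q'.
rewrite last_rcons in last_q'.
case: q' size_q' last_q' {walk_q' out_q' out_xq'} => [|z q''].
  by rewrite size_rcons.
by move=> _ /= last_q'; rewrite -{1}last_q' mem_last.
Qed.

Lemma reduction_structural : structural G1 S2.
Proof.
case: S2_structural => S2_neq0 _ _ no_lam; split=> //; first exact: reduction_acyclic.
move=> v S1v notS2v; rewrite reduction_loop; last exact/andP.
exact: no_lam (subsetP sub_S1V _ S1v) notS2v.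
Qed.

Variable j : T.
Hypothesis S2j : j \in S2.

Local Notation g x := (branch_sum G S2 x j).
Local Notation e x y := (branch_sum G S1 x y).
Local Notation h y := (g y / (lam R - wt G y y)).

Lemma S1j : j \in S1.
Proof. exact: subsetP S2j. Qed.

(* A branch of [G] relative to [S2] is cut at its vertices in [S1]. *)
Lemma branch_sum_via_S1 z : outside G S1 z ->
  g z = e z j + \sum_(y | outside G1 S2 y) e z y * h y.
Proof.
pose c w := wt G w j + \sum_(y | outside G1 S2 y) wt G w y * h y.
move: z; apply: (branch_system_uniq (c := c) (u := fun x => g x)
  (v := fun z => e z j + \sum_(y | outside G1 S2 y) e z y * h y) S1_acyclic).
  move=> x /andP [Vx notS1x]; rewrite (branch_sum_rec S2_acyclic Vx S2j).
  rewrite big_outside_split addrA /c; congr (_ + _ + _).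
  rewrite sumr_drop_neq => [|/andP [S1x _]]; last by rewrite S1x in notS1x.
  by apply: eq_bigr => y _; rewrite mul_interior_wt.
move=> x /andP [Vx _]; rewrite (branch_sum_rec S1_acyclic Vx S1j).
have expand : \sum_(y | outside G1 S2 y) e x y * h y =
    \sum_(y | outside G1 S2 y) wt G x y * h y +
    \sum_(z | outside G S1 z && (z != x))
       interior_wt G x z * \sum_(y | outside G1 S2 y) e z y * h y.
  rewrite (eq_bigr (fun y => wt G x y * h y + \sum_(z | outside G S1 z && (z != x))
      interior_wt G x z * (e z y * h y))) => [|y /andP [S1y _]].
    rewrite big_split [X in _ + X = _]exchange_big; congr (_ + _).
    by apply: eq_bigr => z _; rewrite mulr_sumr.
  rewrite (branch_sum_rec S1_acyclic Vx S1y) mulrDl mulr_suml; congr (_ + _).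
  by apply: eq_bigr => z _; rewrite [RHS]mulrA.
rewrite expand /c (eq_bigr _ (fun z _ => mulrDr _ _ _)) big_split.
by rewrite addrACA.
Qed.

Lemma sum_outside_S1 a : a \in S1 ->
  \sum_(z | outside G S1 z && (z != a)) interior_wt G a z * g z =
  \sum_(z | outside G S1 z && (z != a)) interior_wt G a z * e z j +
  \sum_(y | outside G1 S2 y && (y != a))
     (\sum_(z | outside G S1 z && (z != a)) interior_wt G a z * e z y) * h y.
Proof.
move=> S1a; rewrite (eq_bigr (fun z => interior_wt G a z * e z j +
    \sum_(y | outside G1 S2 y && (y != a)) interior_wt G a z * (e z y * h y)));
  last first.
  move=> z /andP [out_z _]; rewrite branch_sum_via_S1 // mulrDr mulr_sumr.
  congr (_ + _); rewrite sumr_drop_neq // => out_a.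
  have [e_az | /negPn/eqP wt0] := boolP (edge G a z).
    by rewrite branch_sum_eq0 ?mul0r ?mulr0 // => p; apply: no_return.
  by rewrite /interior_wt wt0 !mul0r.
rewrite big_split [X in _ + X = _]exchange_big; congr (_ + _).
by apply: eq_bigr => y _; rewrite mulr_suml; apply: eq_bigr => z _; rewrite mulrA.
Qed.

Lemma branch_sum_reduction_rec a : a \in S1 ->
  g a = wt G1 a j +
    \sum_(y | outside G1 S2 y && (y != a)) interior_wt G1 a y * g y.
Proof.
move=> S1a; have Va := subsetP sub_S1V a S1a.
have -> : \sum_(y | outside G1 S2 y && (y != a)) interior_wt G1 a y * g y =
          \sum_(y | outside G1 S2 y && (y != a)) e a y * h y.
  apply: eq_bigr => y /andP [out_y _]; have /andP [S1y _] := out_y.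
  by rewrite mul_interior_wt reduction_loop // reduction_wt.
have expand : \sum_(y | outside G1 S2 y && (y != a)) e a y * h y =
    \sum_(y | outside G1 S2 y && (y != a)) interior_wt G a y * g y +
    \sum_(y | outside G1 S2 y && (y != a))
       (\sum_(z | outside G S1 z && (z != a)) interior_wt G a z * e z y) * h y.
  rewrite -[RHS]big_split; apply: eq_bigr => y /andP [/andP [S1y _] _].
  by rewrite (branch_sum_rec S1_acyclic Va S1y) mulrDl mul_interior_wt.
rewrite reduction_wt ?S1j // (branch_sum_rec S1_acyclic Va S1j) expand.
rewrite (branch_sum_rec S2_acyclic Va S2j) big_outside_split sum_outside_S1 //.
by rewrite addrA addrACA.
Qed.

Lemma branch_sum_reduction i : i \in S2 -> branch_sum G1 S2 i j = g i.
Proof.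
move=> S2i; have S1i : i \in S1 := subsetP sub_S2S1 i S2i.
have agree : forall x, outside G1 S2 x -> branch_sum G1 S2 x j = g x.
  apply: (branch_system_uniq (c := fun x => wt G1 x j) reduction_acyclic).
    by move=> x /andP [S1x _]; apply: (branch_sum_rec reduction_acyclic S1x S2j).
  by move=> x /andP [S1x _]; apply: branch_sum_reduction_rec.
rewrite (branch_sum_rec reduction_acyclic S1i S2j) branch_sum_reduction_rec //.
by congr (_ + _); apply: eq_bigr => y /andP [out_y _]; rewrite agree.
Qed.
End TwoReductions.

Lemma reduction_twice (T : finType) (R : realType) (G : graph T R)
    (S1 S2 : {set T}) :
  S1 \subset verts G -> S2 \subset S1 -> structural G S2 ->
  structural (reduction G S1) S2 /\
  graph_eq (reduction (reduction G S1) S2) (reduction G S2).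
Proof.
move=> sub_S1V sub_S2S1 S2_structural.
split; first exact: reduction_structural.
split=> // u v S2u S2v; rewrite !reduction_wt //.
exact: branch_sum_reduction.
Qed.

Lemma graph_eq_trans (T : finType) (R : realType) (A B C : graph T R) :
  graph_eq A B -> graph_eq B C -> graph_eq A C.
Proof.
move=> [eqV_AB eqW_AB] [eqV_BC eqW_BC]; split; first by rewrite eqV_AB.
by move=> u v Au Av; rewrite eqW_AB // eqW_BC // -eqV_AB.
Qed.

Lemma path_subset_last (T : finType) (X Y : {set T}) (ss : seq {set T}) :
  path (fun A B : {set T} => B \subset A) X (rcons ss Y) -> Y \subset X.
Proof.
elim: ss X => [|Z ss IH] X /=; first by rewrite andbT.
by case/andP=> sub_ZX /IH sub_YZ; apply: subset_trans sub_ZX.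
Qed.

Theorem theorem2 (T : finType) (R : realType) (G : graph T R)
    (ss : seq {set T}) (Sm : {set T}) :
  structural G Sm ->
  path (fun A B : {set T} => B \subset A) (verts G) (rcons ss Sm) ->
  induces_seq G (rcons ss Sm) /\
  graph_eq (reduction_seq G (rcons ss Sm)) (reduction G Sm).
Proof.
elim: ss G => [|S1 ss IH] G Sm_structural /=; first by split; [split | split].
case/andP=> sub_S1V chain.
have sub_SmS1 := path_subset_last chain.
have [Sm_structural_red eq_twice] := reduction_twice sub_S1V sub_SmS1 Sm_structural.
have [induces eq_rest] := IH (reduction G S1) Sm_structural_red chain.
split; first by split=> //; exact: structuralS sub_SmS1 sub_S1V Sm_structural.
exact: graph_eq_trans eq_rest eq_twice.
Qed.
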